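(* Let $C$ be an independent set of the Kneser graph of flags of type $\{2,3\}$ of $\mathrm{PG}(6,q)$, let $H$ be a hyperplane and $P$ a point of $\mathrm{PG}(6,q)$. (i) Let $\mathcal{E}$ be the set of planes $E$ of $H$ for which there is a solid $S$ with $(E,S)\in C$ and $E=H\cap S$. Then $E\cap E'\neq\emptyset$ for all $E,E'\in\mathcal{E}$, i.e. $\mathcal{E}$ is an independent set of the Kneser graph of planes of $H$; hence $|\mathcal{E}|\le\begin{bmatrix}5\\2\end{bmatrix}_q$. (ii) Let $\mathcal{S}$ be the set of solids $S$ for which there is a flag $(E,S)\in C$ with $P\in S\setminus E$. Then $|\mathcal{S}|\le\begin{bmatrix}5\\2\end{bmatrix}_q$.
   Context: Dimensions are projective (planes 2, solids 3, hyperplanes 5). A flag of type $\{2,3\}$ is a pair $(E,S)$ of a plane $E$ and a solid $S$ with $E\subseteq S$; in the Kneser graph distinct flags $(E,S),(E',S')$ are adjacent iff $E\cap S'=\emptyset$ and $E'\cap S=\emptyset$. The Kneser graph of planes of $H$ has planes of $H$ as vertices, adjacent iff disjoint. $\begin{bmatrix}5\\2\end{bmatrix}_q=\frac{(q^5-1)(q^4-1)}{(q^2-1)(q-1)}$. *)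

(* PG(6,q) = projective geometry of the vector space F^7,
   F a finite field with q = #|F| elements. A projective subspace of
   projective dimension k is a vector subspace of dimension k+1, represented
   canonically by a square matrix A : 'M[F]_7 with <<A>>%MS = A (its row space). *)
From HB Require Import structures.
From mathcomp Require Import all_boot all_order all_algebra all_fingroup.
Set Implicit Arguments. Unset Strict Implicit. Unset Printing Implicit Defensive.
Import GRing.Theory.
Local Open Scope ring_scope.

Definition subsp (F : fieldType) (d : nat) (A : 'M[F]_7) : bool :=
  (<<A>>%MS == A) && (\rank A == d).

Definition is_point (F : fieldType) (A : 'M[F]_7) := subsp 1 A.
Definition is_plane (F : fieldType) (A : 'M[F]_7) := subsp 3 A.
Definition is_solid (F : fieldType) (A : 'M[F]_7) := subsp 4 A.
Definition is_hyperplane (F : fieldType) (A : 'M[F]_7) := subsp 6 A.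

Definition disjoint_sub (F : fieldType) (A B : 'M[F]_7) : bool :=
  (A :&: B)%MS == 0.

Definition is_flag23 (F : fieldType) (f : 'M[F]_7 * 'M[F]_7) : bool :=
  [&& is_plane f.1, is_solid f.2 & (f.1 <= f.2)%MS].

Definition flag_adj (F : fieldType) (f g : 'M[F]_7 * 'M[F]_7) : bool :=
  [&& f != g, disjoint_sub f.1 g.2 & disjoint_sub g.1 f.2].

Definition flag_indep (F : finFieldType) (C : {set 'M[F]_7 * 'M[F]_7}) : Prop :=
  (forall f, f \in C -> is_flag23 f) /\
  (forall f g, f \in C -> g \in C -> ~~ flag_adj f g).

Definition gauss52 (q : nat) : nat :=
  ((q ^ 5 - 1) * (q ^ 4 - 1)) %/ ((q ^ 2 - 1) * (q - 1)).

From HB Require Import structures.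
From mathcomp Require Import all_boot all_order all_algebra all_fingroup.
From mathcomp Require Import zify ring.
Set Implicit Arguments. Unset Strict Implicit. Unset Printing Implicit Defensive.
Import GRing.Theory.
Local Open Scope ring_scope.

(* Both bounds reduce to the Erdos-Ko-Rado theorem for planes of PG(5,q):
   pairwise intersecting planes of a 5-space number at most [5 2]_q.
   (i) The traces H :&: S are planes of H; if two traces E, E' were disjoint,
   then E :&: S' <= E :&: E' = 0 and E' :&: S = 0, so the flags (E,S) and
   (E',S') would be adjacent.
   (ii) A solid S through P is determined by its trace on a hyperplane P^C
   complementary to P, and this trace is a plane.  If the traces of S and S'
   were disjoint, S :&: S' would be the point P, which lies neither on E nor
   on E', so again the flags would be adjacent.
   The Erdos-Ko-Rado bound follows by averaging over spreads: the field of
   order q^3, realised as the 3x3 matrices that are polynomials in the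
   companion matrix of an irreducible cubic, yields q^3 + 1 pairwise
   complementary planes of F^6.  Transported by any ordered basis of the
   5-space, at most one of them lies in an intersecting family X, so counting
   pairs (spread member, basis) gives (q^3 + 1) |X| N <= #bases, where N is
   the number of ordered bases whose first three vectors span a given plane;
   and #bases = (q^3 + 1) [5 2]_q N. *)

Lemma gauss52E (q : nat) : (1 < q)%N ->
  gauss52 q = ((q ^ 4 + q ^ 3 + q ^ 2 + q + 1) * (q ^ 2 + 1))%N.
Proof.
move=> q_gt1; rewrite /gauss52.
have den_gt0 : (0 < (q ^ 2 - 1) * (q - 1))%N.
  by rewrite muln_gt0 !subn_gt0 q_gt1 andbT -{1}(expn0 q) ltn_exp2l.
suff -> : ((q ^ 5 - 1) * (q ^ 4 - 1))%N = ((q ^ 2 - 1) * (q - 1) *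
                 ((q ^ 4 + q ^ 3 + q ^ 2 + q + 1) * (q ^ 2 + 1)))%N.
  by rewrite mulKn.
apply/eqP; rewrite -eqz_nat; apply/eqP.
rewrite !PoszM -!subzn ?expn_gt0 ?(ltnW q_gt1) // !PoszD -!natz !natrX.
ring.
Qed.

Lemma prod_frames6_gauss52 (q : nat) : (1 < q)%N ->
  (\prod_(i < 3 + 3) (q ^ (3 + 3) - q ^ i))%N =
  ((q ^ 3).+1 * gauss52 q *
   (\prod_(i < 3) (q ^ 3 - q ^ i) * \prod_(i < 3) (q ^ (3 + 3) - q ^ (3 + i))))%N.
Proof.
move=> q_gt1; rewrite gauss52E // !big_ord_recl !big_ord0 /=.
apply/eqP; rewrite -eqz_nat; apply/eqP.
rewrite !PoszM -!subzn ?leq_pexp2l ?(ltnW q_gt1) // !PoszD -!natz !natrX.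
ring.
Qed.

Section FreeOver.
Variables (F : fieldType) (n : nat).

Definition free_over r (A : 'M[F]_(r, n)) m (B : 'M[F]_(m, n)) :=
  \rank (A + B)%MS == (\rank A + m)%N.

Lemma mxrank_adds_leq_rows r m (A : 'M[F]_(r, n)) (B : 'M_(m, n)) :
  (\rank (A + B)%MS <= \rank A + m)%N.
Proof.
by rewrite (leq_trans (mxrank_adds_leqif A B)) // leq_add2l rank_leq_row.
Qed.

Lemma eqmx_free_over r1 r2 (A1 : 'M_(r1, n)) (A2 : 'M_(r2, n)) m (B : 'M_(m, n)) :
  (A1 :=: A2)%MS -> free_over A1 B = free_over A2 B.
Proof. by move=> eqA; rewrite /free_over (adds_eqmx eqA (eqmx_refl B)) eqA. Qed.

Lemma free_over0 m (B : 'M_(m, n)) : free_over (0 : 'M_n) B = row_free B.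
Proof. by rewrite /free_over adds0mx mxrank0. Qed.

Lemma free_over_row r (A : 'M_(r, n)) (b : 'rV_n) :
  free_over A b = ~~ (b <= A)%MS.
Proof.
have [leA eqA] := mxrank_leqif_sup (addsmxSl A b).
rewrite addsmx_sub submx_refl /= in eqA.
have := mxrank_adds_leq_rows A b; rewrite /free_over -eqA.
by move: leA; case: eqP; lia.
Qed.

Lemma free_over_col_mx r (A : 'M_(r, n)) m1 m2 (B1 : 'M_(m1, n)) (B2 : 'M_(m2, n)) :
  free_over A (col_mx B1 B2) = free_over A B1 && free_over (A + B1)%MS B2.
Proof.
rewrite /free_over (adds_eqmx (eqmx_refl A) (eqmx_sym (addsmxE B1 B2))) addsmxA.
have := mxrank_adds_leq_rows A B1; have := mxrank_adds_leq_rows (A + B1)%MS B2.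
move=> le2 le1; apply/eqP/andP => [e | [/eqP e1 /eqP e2]]; last lia.
by split; apply/eqP; lia.
Qed.

End FreeOver.

Section BlockUnits.
Variables (F : fieldType) (k : nat).

Lemma capmx_col_mx_unit n (Y Z : 'M[F]_(k, k + k)) (B : 'M_(k + k, n)) :
  col_mx Y Z \in unitmx -> row_free B -> (Y *m B :&: Z *m B)%MS == 0.
Proof.
move=> uYZ freeB; rewrite -mxrank_eq0.
have rYZB : \rank (Y *m B + Z *m B)%MS = (k + k)%N.
  by rewrite addsmxE -mul_col_mx mxrankMfree // mxrank_unit.
have := mxrank_sum_cap (Y *m B) (Z *m B); rewrite rYZB.
by have := rank_leq_row (Y *m B); have := rank_leq_row (Z *m B); lia.
Qed.

Lemma unitmx_col_mxC (Y Z : 'M[F]_(k, k + k)) :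
  (col_mx Y Z \in unitmx) = (col_mx Z Y \in unitmx).
Proof. by rewrite -!row_full_unit /row_full -!addsmxE addsmxC. Qed.

Lemma unitmx_ublock1 (M N : 'M[F]_k) :
  (block_mx 1%:M M 0 N \in unitmx) = (N \in unitmx).
Proof. by rewrite !unitmxE det_ublock det1 mul1r. Qed.

Lemma unitmx_col_mx_row1 (M N : 'M[F]_k) :
  (col_mx (row_mx 1%:M M) (row_mx 1%:M N) \in unitmx) = (N - M \in unitmx).
Proof.
have -> : col_mx (row_mx 1%:M M) (row_mx 1%:M N) =
          block_mx 1%:M 0 1%:M 1%:M *m block_mx 1%:M M 0 (N - M).
  by rewrite mulmx_block !mul1mx !mul0mx !addr0 addrC subrK block_mxEv.
by rewrite unitmx_mul unitmx_ublock1 unitmxE det_lblock !det1 mulr1 unitr1.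
Qed.

End BlockUnits.

Lemma horner_mx_unit (F : fieldType) k (A : 'M[F]_k.+1) (f : {poly F}) :
  irreducible_poly (char_poly A) -> f != 0 -> (size f <= k.+1)%N ->
  horner_mx A f \in unitmx.
Proof.
move=> irrA f_neq0 size_f.
have : coprimep (char_poly A) f.
  rewrite irreducible_poly_coprime //; apply: contraTN size_f => /(dvdp_leq f_neq0).
  by rewrite size_char_poly -ltnNge.
case/Bezout_eq1_coprimepP => -[u v] /= /(congr1 (horner_mx A)).
rewrite rmorphD !rmorphM /= Cayley_Hamilton mulr0 add0r rmorph1 -mulmxE.
by case/mulmx1_unit.
Qed.

Lemma size_monic_subXn (R : nzRingType) (p : {poly R}) n :
  p \is monic -> size p = n.+1 -> (size (p - 'X^n)%R <= n)%N.
Proof.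
move=> /monicP lead_p size_p; apply/leq_sizeP => j le_nj; rewrite coefB coefXn.
rewrite leq_eqVlt in le_nj; case/predU1P: le_nj => [<-|lt_nj].
  by rewrite -lead_p lead_coefE size_p eqxx subrr.
by rewrite nth_default ?size_p // gtn_eqF // subr0.
Qed.

Section Frames.
Variable F : finFieldType.
Local Notation q := #|F|.

Lemma card_rV_submx n m (U : 'M[F]_(m, n)) :
  #|[set b : 'rV_n | (b <= U)%MS]| = (q ^ \rank U)%N.
Proof.
have -> : [set b : 'rV_n | (b <= U)%MS] = [set c *m row_base U | c : 'rV_(\rank U)].
  apply/setP => b; rewrite inE; apply/idP/imsetP => [|[c _ ->]].
    by rewrite -(eq_row_base U) => /submxP[c ->]; exists c.
  by rewrite -(eq_row_base U) submxMl.
rewrite card_imset; last exact: row_free_inj (row_base_free U).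
by rewrite card_mx mul1n.
Qed.

Lemma card_col_mx m1 m2 n (P : 'M[F]_(m1, n) -> 'M[F]_(m2, n) -> bool) :
  #|[set B : 'M_(m1 + m2, n) | P (usubmx B) (dsubmx B)]| =
  (\sum_(B1 : 'M_(m1, n)) #|[set B2 | P B1 B2]|)%N.
Proof.
have -> : [set B : 'M_(m1 + m2, n) | P (usubmx B) (dsubmx B)] =
    [set col_mx BB.1 BB.2 | BB in [set BB | P BB.1 BB.2]].
  apply/setP => B; rewrite inE; apply/idP/imsetP => [PB | [[B1 B2]]].
    by exists (usubmx B, dsubmx B); rewrite ?inE ?vsubmxK.
  by rewrite inE /= => PB ->; rewrite col_mxKu col_mxKd.
rewrite card_imset; last by move=> [B1 B2] [B1' B2'] /eq_col_mx [/= -> ->].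
under [RHS]eq_bigr do rewrite -sum1dep_card.
by rewrite -sum1dep_card pair_big_dep.
Qed.

Lemma card_free_over_sub n (U : 'M[F]_n) m r (A : 'M_(r, n)) : (A <= U)%MS ->
  #|[set B : 'M_(m, n) | free_over A B && (B <= U)%MS]| =
  (\prod_(i < m) (q ^ \rank U - q ^ (\rank A + i)))%N.
Proof.
elim: m r A => [|m IHm] r A sAU.
  rewrite big_ord0 -(expn0 q) -(mul0n n) -card_mx -cardsT; apply: eq_card => B.
  by rewrite !inE flatmx0 /free_over addsmx0 addn0 eqxx sub0mx.
pose P (b : 'rV_n) (B : 'M_(m, n)) :=
  free_over A (col_mx b B) && (col_mx b B <= U)%MS.
have -> : [set B : 'M_(m.+1, n) | free_over A B && (B <= U)%MS] =
          [set B : 'M_(1 + m, n) | P (usubmx B) (dsubmx B)].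
  by apply/setP => B; rewrite !inE /P vsubmxK.
have card_tail (b : 'rV_n) : (#|[set B | P b B]| =
    if (b <= U)%MS && ~~ (b <= A)%MS then
      \prod_(i < m) (q ^ \rank U - q ^ (\rank A + 1 + i)) else 0)%N.
  case bU : (b <= U)%MS; case bA : (b <= A)%MS => /=;
    try by apply: eq_card0 => B;
    rewrite !inE /P free_over_col_mx free_over_row col_mx_sub bU bA ?andbF.
  have /eqP rAb : free_over A b by rewrite free_over_row bA.
  rewrite -rAb -IHm ?addsmx_sub ?sAU //; apply: eq_card => B.
  by rewrite !inE /P free_over_col_mx free_over_row col_mx_sub bU bA.
rewrite (card_col_mx P) (eq_bigr _ (fun b _ => card_tail b)) big_ord_recl addn0.
rewrite -big_mkcond sum_nat_cond_const.
congr (_ * _)%N; last by apply: eq_bigr => i _; rewrite addn1 addSnnS.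
rewrite (_ : [set b | _] = [set b : 'rV_n | (b <= U)%MS] :\: [set b | (b <= A)%MS]).
  rewrite cardsDS ?card_rV_submx //.
  by apply/subsetP => b; rewrite !inE => /submx_trans->.
by apply/setP => b; rewrite !inE andbC.
Qed.

Definition frames n (U : 'M[F]_n) m :=
  [set B : 'M_(m, n) | row_free B && (B <= U)%MS].

Lemma card_frames n (U : 'M[F]_n) m :
  #|frames U m| = (\prod_(i < m) (q ^ \rank U - q ^ i))%N.
Proof.
have := card_free_over_sub m (sub0mx n U); rewrite mxrank0 => <-.
by apply: eq_card => B; rewrite !inE free_over0.
Qed.

Lemma genmx_eq_frames n k (x : 'M[F]_n) (B : 'M_(k, n)) :
  <<x>>%MS = x -> \rank x = k -> (<<B>>%MS == x) = (B \in frames x k).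
Proof.
move=> gx rx; rewrite inE; apply/eqP/andP => [eBx | [freeB sBx]].
  by rewrite -eBx genmxE in rx; rewrite /row_free rx -eBx genmxE.
rewrite -gx; apply/eq_genmx/eqmxP.
by rewrite -(mxrank_leqif_eq sBx) rx.
Qed.

Lemma card_frames_usubmx n (H x : 'M[F]_n) k l :
  <<x>>%MS = x -> \rank x = k -> (x <= H)%MS ->
  #|[set B in frames H (k + l)%N | <<usubmx B>>%MS == x]| =
  (\prod_(i < k) (q ^ k - q ^ i) * \prod_(i < l) (q ^ \rank H - q ^ (k + i)))%N.
Proof.
move=> gx rx sxH.
pose P (B1 : 'M_(k, n)) (B2 : 'M_(l, n)) :=
  (B1 \in frames x k) && (free_over x B2 && (B2 <= H)%MS).
have -> : [set B in frames H (k + l)%N | <<usubmx B>>%MS == x] =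
          [set B | P (usubmx B) (dsubmx B)].
  apply/setP => B; rewrite !inE /P -genmx_eq_frames // andbC.
  rewrite -[in row_free B](vsubmxK B) -[in (B <= H)%MS](vsubmxK B).
  rewrite -free_over0 free_over_col_mx col_mx_sub.
  have [eB1x | //] := eqP.
  have eqB1x : ((0 : 'M_n) + usubmx B :=: x)%MS.
    by apply: eqmx_trans (adds0mx _ _) _; rewrite -eB1x; apply/eqmx_sym/genmxE.
  have sB1x : (usubmx B <= x)%MS by rewrite -eB1x genmxE.
  have rB1 : \rank (usubmx B) = k by rewrite -[RHS]rx -eB1x genmxE.
  rewrite free_over0 /row_free rB1 (eqmx_free_over _ eqB1x).
  by rewrite (submx_trans sB1x sxH) eqxx.
have card_tail B1 : #|[set B2 | P B1 B2]| =
    if B1 \in frames x k then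
      #|[set B2 : 'M_(l, n) | free_over x B2 && (B2 <= H)%MS]| else 0%N.
  by case: ifP => inB1; [apply: eq_card | apply: eq_card0] => B2;
    rewrite !inE /P inB1.
rewrite (card_col_mx P) (eq_bigr _ (fun B1 _ => card_tail B1)) -big_mkcond.
by rewrite sum_nat_const card_frames card_free_over_sub // rx.
Qed.

Lemma card_frames_mul_usubmx n (H x : 'M[F]_n) k l (T : 'M_(k + l)) :
  T \in unitmx ->
  #|[set B in frames H (k + l)%N | <<usubmx T *m B>>%MS == x]| =
  #|[set B in frames H (k + l)%N | <<usubmx B>>%MS == x]|.
Proof.
move=> uT; have eqTB B : (T *m B :=: B)%MS.
  by apply: eqmxMfull; rewrite row_full_unit.
rewrite -[in RHS](card_preimset _ (can_inj (mulKmx uT))).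
by apply: eq_card => B; rewrite !inE /row_free !eqTB mul_usub_mx.
Qed.

Lemma sum_card_preim (T U : finType) (A : {set T}) (X : {set U}) (f : T -> U) :
  #|[set t in A | f t \in X]| = (\sum_(x in X) #|[set t in A | f t == x]|)%N.
Proof.
rewrite -sum1dep_card (partition_big f (fun x => x \in X)) => [|t /andP[]//].
apply: eq_bigr => x Xx; rewrite -sum1dep_card; apply: eq_bigl => t.
by rewrite -andbA; case: eqP => [->|_]; rewrite ?Xx ?andbF ?andbT.
Qed.

Lemma double_count (T U : finType) (A : {set T}) (B : {set U})
    (R : T -> U -> bool) :
  (\sum_(x in A) #|[set y in B | R x y]|)%N =
  (\sum_(y in B) #|[set x in A | R x y]|)%N.
Proof.
under eq_bigr do rewrite -sum1dep_card big_mkcondr.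
rewrite exchange_big; apply: eq_bigr => y _.
by rewrite -sum1dep_card big_mkcondr.
Qed.

End Frames.

Section Spreads.
Variable F : finFieldType.
Local Notation q := #|F|.

(* Coordinates of a partial spread: for every frame B of a 2k-space, the
   k-spaces <<Y *m B>> (Y in K) pairwise meet trivially (capmx_col_mx_unit). *)
Definition mx_spread k (K : {set 'M[F]_(k, k + k)}) :=
  {in K &, forall Y Z, Y != Z -> col_mx Y Z \in unitmx}.

Definition spread_set k (S : {set 'M[F]_k}) :=
  {in S &, forall M N, M != N -> M - N \in unitmx}.

Definition spread_of_set k (S : {set 'M[F]_k}) : {set 'M[F]_(k, k + k)} :=
  row_mx 0 1%:M |: [set row_mx 1%:M M | M in S].

Lemma card_spread_of_set k (S : {set 'M[F]_k.+1}) : #|spread_of_set S| = #|S|.+1.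
Proof.
rewrite cardsU1 card_imset => [|M N /eq_row_mx[] //].
suff -> : row_mx 0 1%:M \notin [set row_mx 1%:M M | M in S] by [].
apply/imsetP => -[M _ /eq_row_mx[/matrixP/(_ ord0 ord0)/eqP]].
by rewrite !mxE /= eq_sym oner_eq0.
Qed.

Lemma mx_spread_of_set k (S : {set 'M[F]_k}) :
  spread_set S -> mx_spread (spread_of_set S).
Proof.
have unit_row10 (M : 'M[F]_k) : col_mx (row_mx 1%:M M) (row_mx 0 1%:M) \in unitmx.
  by rewrite -block_mxEv unitmx_ublock1 unitmx1.
move=> spS Y Z; rewrite !in_setU1.
case/predU1P=> [->|/imsetP[M SM ->]] /predU1P[->|/imsetP[N SN ->]].
- by rewrite eqxx.
- by rewrite unitmx_col_mxC unit_row10.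
- by rewrite unit_row10.
move=> neqMN; rewrite unitmx_col_mx_row1 spS //.
by apply: contraNneq neqMN => ->.
Qed.

Lemma exists_spread_set k (p : {poly F}) :
  irreducible_poly p -> p \is monic -> size p = k.+2 ->
  exists S : {set 'M[F]_k.+1}, #|S| = (q ^ k.+1)%N /\ spread_set S.
Proof.
move=> irr_p monic_p size_p.
have := companionmxK monic_p; move: (companionmx p); rewrite size_p => A charA.
rewrite -charA in irr_p.
have unit_horner (f : {poly_k.+1 F}) : f != 0 -> horner_mx A f \in unitmx.
  by move=> f_neq0; apply: horner_mx_unit; rewrite ?size_npoly.
have hornerB (f g : {poly_k.+1 F}) :
    horner_mx A f - horner_mx A g = horner_mx A (f - g : {poly_k.+1 F}).
  by rewrite -rmorphB.
exists [set horner_mx A f | f : {poly_k.+1 F}]; split.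
  rewrite card_imset ?card_npoly // => f g eq_fg; apply/eqP; rewrite -subr_eq0.
  apply/negPn/negP => /unit_horner; rewrite -hornerB eq_fg subrr.
  by rewrite unitmxE det0 unitr0.
move=> _ _ /imsetP[f _ ->] /imsetP[g _ ->] neq_fg; rewrite hornerB unit_horner //.
by apply: contraNneq neq_fg => /subr0_eq ->.
Qed.

Lemma exists_irreducible_cubic :
  exists p : {poly F}, [/\ irreducible_poly p, p \is monic & size p = 4%N].
Proof.
pose cubic (g : {poly_3 F}) : {poly F} := 'X^3 + g.
have size_g (g : {poly_3 F}) : (size g < size ('X^3 : {poly F}))%N.
  by rewrite size_polyXn ltnS size_npoly.
have monic_cubic g : cubic g \is monic.
  by rewrite monicE (lead_coefDl (size_g g)) lead_coefXn.
have size_cubic g : size (cubic g) = 4%N.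
  by rewrite (size_polyDl (size_g g)) size_polyXn.
suff /existsP[g /forallP rootless] : [exists g, [forall a, ~~ root (cubic g) a]].
  exists (cubic g); split; rewrite ?monic_cubic ?size_cubic //.
  by apply: cubic_irreducible rootless; rewrite size_cubic.
apply: contraT => /existsPn all_rooted.
(* If every monic cubic had a root, [factor] would be onto, hence injective by
   counting; but X (X^2 - X) = (X - 1) X^2. *)
pose factor (ah : F * {poly_2 F}) : {poly_3 F} :=
  npolyp 3 (('X - ah.1%:P) * ('X^2 + ah.2) - 'X^3).
have factor_onto : [set factor ah | ah in setT] = setT.
  apply/setP => g; rewrite inE; apply/imsetP.
  have [a /negPn root_a] := forallPn (all_rooted g).
  have [r def_r] := factor_theorem _ _ root_a.
  have monic_r : r \is monic by rewrite -(monicMr r (monicXsubC a)) -def_r.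
  have size_r : size r = 3%N.
    have := size_cubic g; rewrite def_r size_Mmonic ?monicXsubC ?monic_neq0 //.
    by rewrite size_XsubC addn2 => -[].
  exists (a, npolyp 2 (r - 'X^2)) => //; apply: val_inj; rewrite /factor /=.
  have -> : 'X^2 + (npolyp 2 (r - 'X^2) : {poly F}) = r.
    by rewrite npolypK ?size_monic_subXn ?size_r // addrC subrK.
  by rewrite mulrC -def_r /cubic (addrC 'X^3) addrK npolypK ?size_npoly.
have /imset_injP factor_inj :
    #|[set factor ah | ah in setT]| == #|[set: F * {poly_2 F}]|.
  by rewrite factor_onto !cardsT card_prod !card_npoly -expnS.
have eq_factor : factor (0, npolyp 2 (- 'X)) = factor (1, 0).
  rewrite /factor /= npolypK ?size_polyN ?size_polyX //.
  by congr npolyp; rewrite polyC0 polyC1 subr0 addr0; ring.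
have [/eqP] := factor_inj _ _ (in_setT _) (in_setT _) eq_factor.
by rewrite eq_sym oner_eq0.
Qed.

Lemma spread_intersecting_le n k (H : 'M[F]_n) (X : {set 'M[F]_n})
    (K : {set 'M[F]_(k, k + k)}) :
  \rank H = (k + k)%N -> (1 < #|K|)%N -> mx_spread K ->
  {in X, forall x, [/\ <<x>>%MS = x, \rank x = k & (x <= H)%MS]} ->
  {in X &, forall x y, (x :&: y)%MS != 0} ->
  (#|K| * #|X| * (\prod_(i < k) (q ^ k - q ^ i) *
                  \prod_(i < k) (q ^ (k + k) - q ^ (k + i))) <=
   \prod_(i < k + k) (q ^ (k + k) - q ^ i))%N.
Proof.
move=> rH K_gt1 spreadK subspX meetX.
set N := (\prod_(i < k) (q ^ k - q ^ i) * _)%N; set Fr := frames H (k + k)%N.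
have per_member Y :
    Y \in K -> #|[set B in Fr | <<Y *m B>>%MS \in X]| = (#|X| * N)%N.
  move=> KY; have [Z KZ neqYZ] : exists2 Z, Z \in K & Y != Z.
    have [Y1 [Y2 [KY1 KY2 neqY12]]] := card_gt1P K_gt1.
    by case: (eqVneq Y Y1) => [->|]; [exists Y2 | exists Y1].
  rewrite sum_card_preim -sum_nat_const; apply: eq_bigr => x Xx.
  have [gx rx sxH] := subspX x Xx.
  rewrite -[Y](col_mxKu Y Z) card_frames_mul_usubmx ?spreadK //.
  by rewrite card_frames_usubmx // rH.
have per_frame B : B \in Fr -> (#|[set Y in K | <<Y *m B>>%MS \in X]| <= 1)%N.
  rewrite inE => /andP[freeB _]; apply/card_le1_eqP => Y Z.
  rewrite !inE => /andP[KY XY] /andP[KZ XZ]; apply/eqP/negPn/negP => neqZY.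
  have := meetX _ _ XZ XY; rewrite -mxrank_eq0 (cap_eqmx (genmxE _) (genmxE _)).
  by rewrite mxrank_eq0 (capmx_col_mx_unit (spreadK _ _ KZ KY neqZY)).
rewrite -mulnA -sum_nat_const (_ : \prod_(i < k + k) _ = #|Fr|); last first.
  by rewrite card_frames rH.
rewrite (eq_bigr _ (fun Y KY => esym (per_member Y KY))).
rewrite double_count -sum1_card; exact: leq_sum.
Qed.

Lemma intersecting_le_gauss52 n (H : 'M[F]_n) (X : {set 'M[F]_n}) :
  \rank H = 6 ->
  {in X, forall x, [/\ <<x>>%MS = x, \rank x = 3 & (x <= H)%MS]} ->
  {in X &, forall x y, (x :&: y)%MS != 0} ->
  (#|X| <= gauss52 q)%N.
Proof.
move=> rH subspX meetX.
have q_gt1 : (1 < q)%N := card_finNzRing_gt1 F.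
have N_gt0 : (0 < \prod_(i < 3) (q ^ 3 - q ^ i) *
                  \prod_(i < 3) (q ^ (3 + 3) - q ^ (3 + i)))%N.
  by rewrite muln_gt0; apply/andP; split; apply: prodn_gt0 => i;
    rewrite subn_gt0 ltn_exp2l //; have := ltn_ord i; lia.
have [p [irr_p monic_p size_p]] := exists_irreducible_cubic.
have [S [card_S spread_S]] := exists_spread_set irr_p monic_p size_p.
have := @spread_intersecting_le n 3 H X _ rH _ (mx_spread_of_set spread_S).
rewrite card_spread_of_set card_S prod_frames6_gauss52 //.
rewrite ltnS expn_gt0 (ltnW q_gt1) => /(_ isT subspX meetX).
by rewrite -!mulnA leq_pmul2l // leq_pmul2r.
Qed.

End Spreads.

Section Complements.
Variables (F : fieldType) (n : nat).
Implicit Types (A S T : 'M[F]_n).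

Lemma addsmx_compl_capmx A S : (A <= S)%MS -> (A + A^C :&: S :=: S)%MS.
Proof.
move=> sAS; apply: eqmx_trans (matrix_modl _ sAS) _.
by apply/capmx_idPr; apply/submx_full/addsmx_compl_full.
Qed.

Lemma mxrank_compl_capmx A S :
  (A <= S)%MS -> \rank (A^C :&: S) = (\rank S - \rank A)%N.
Proof.
move=> sAS; have := mxrank_sum_cap A (A^C :&: S)%MS.
have /eqP cap0 : \rank (A :&: (A^C :&: S)) == 0%N.
  by rewrite mxrank_eq0 -submx0 -(capmx_compl A) capmxS ?capmxSl.
by rewrite (addsmx_compl_capmx sAS) cap0; lia.
Qed.

Lemma compl_capmx_inj A S T : (A <= S)%MS -> (A <= T)%MS ->
  (A^C :&: S :=: A^C :&: T)%MS -> (S :=: T)%MS.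
Proof.
move=> sAS sAT eqST; apply: eqmx_trans (eqmx_sym (addsmx_compl_capmx sAS)) _.
exact: eqmx_trans (adds_eqmx (eqmx_refl A) eqST) (addsmx_compl_capmx sAT).
Qed.

Lemma mxrank_leq_capmx A S : (\rank S <= \rank (A :&: S) + (n - \rank A))%N.
Proof. by have := mxrank_sum_cap A S; have := rank_leq_col (A + S)%MS; lia. Qed.

Lemma point_capmx_eq0 (P E : 'M[F]_n) : \rank P = 1%N -> ~~ (P <= E)%MS ->
  (E :&: P)%MS == 0.
Proof.
move=> rP; apply: contraNT; rewrite -mxrank_eq0 -lt0n => rEP_gt0.
have /eqmxP eqEP : (E :&: P == P)%MS.
  rewrite -(mxrank_leqif_eq (capmxSr E P)) eqn_leq mxrankS ?capmxSr //.
  by rewrite rP.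
by rewrite -eqEP capmxSl.
Qed.

End Complements.

Section DisjointSub.
Variable F : fieldType.
Implicit Types A B E H P S T : 'M[F]_7.

Lemma disjoint_subxx A : disjoint_sub A A = (A == 0).
Proof. by rewrite /disjoint_sub -!submx0 (capmx_idPl (submx_refl A)). Qed.

Lemma disjoint_sub_trace H E T E' : (E <= H)%MS -> (H :&: T <= E')%MS ->
  disjoint_sub E E' -> disjoint_sub E T.
Proof.
rewrite /disjoint_sub -!submx0 => sEH sHTE'; apply: submx_trans.
rewrite sub_capmx capmxSl (submx_trans _ sHTE') // sub_capmx capmxSr andbT.
exact: submx_trans (capmxSl _ _) sEH.
Qed.

Lemma disjoint_sub_point P E S T : \rank P = 1%N -> (P <= S :&: T)%MS ->
  (\rank (S :&: T) <= 1)%N -> ~~ (P <= E)%MS -> (E <= S)%MS -> disjoint_sub E T.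
Proof.
move=> rP sPST rST nPE sES.
have /eqmxP eqPST : (P == S :&: T)%MS.
  by rewrite -(mxrank_leqif_eq sPST) eqn_leq mxrankS // rP.
have := point_capmx_eq0 rP nPE; rewrite /disjoint_sub -!submx0; apply: submx_trans.
rewrite sub_capmx capmxSl eqPST sub_capmx capmxSr.
by rewrite (submx_trans (capmxSl _ _) sES).
Qed.

End DisjointSub.

Section IndependentFlags.
Variables (F : finFieldType) (C : {set 'M[F]_7 * 'M[F]_7}).
Hypothesis indepC : flag_indep C.

Definition hyperplane_traces (H : 'M[F]_7) : {set 'M[F]_7} :=
  [set E | is_plane E && [exists S, ((E, S) \in C) && (E == H :&: S)%MS]].

Definition solids_off_point (P : 'M[F]_7) : {set 'M[F]_7} :=
  [set S | [exists E, [&& (E, S) \in C, (P <= S)%MS & ~~ (P <= E)%MS]]].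

Lemma flag_indep_eq f g : f \in C -> g \in C ->
  disjoint_sub f.1 g.2 -> disjoint_sub g.1 f.2 -> f = g.
Proof.
move=> Cf Cg dfg dgf; apply/eqP.
by have := indepC.2 f g Cf Cg; rewrite /flag_adj dfg dgf !andbT => /negPn.
Qed.

Lemma hyperplane_traces_meet H :
  {in hyperplane_traces H &, forall E E', ~~ disjoint_sub E E'}.
Proof.
move=> E E'; rewrite !inE => /andP[planeE /existsP[S /andP[CES /eqmxP eqE]]].
move=> /andP[_ /existsP[S' /andP[CES' /eqmxP eqE']]]; apply/negP => dEE'.
have sEH : (E <= H)%MS by rewrite eqE capmxSl.
have sE'H : (E' <= H)%MS by rewrite eqE' capmxSl.
have dES' : disjoint_sub E S'.
  by apply: disjoint_sub_trace sEH _ dEE'; rewrite -eqE'.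
have dE'S : disjoint_sub E' S.
  by apply: disjoint_sub_trace sE'H _ _; rewrite -?eqE // /disjoint_sub capmxC.
have [eqEE' _] := flag_indep_eq CES CES' dES' dE'S.
move: dEE'; rewrite -eqEE' disjoint_subxx -mxrank_eq0.
by case/andP: planeE => _ /eqP ->.
Qed.

Lemma card_hyperplane_traces H : is_hyperplane H ->
  (#|hyperplane_traces H| <= gauss52 #|F|)%N.
Proof.
case/andP => _ /eqP rH; apply: intersecting_le_gauss52 rH _ _; last first.
  exact: hyperplane_traces_meet.
move=> E; rewrite inE => /andP[/andP[/eqP gE /eqP rE]].
move=> /existsP[S /andP[_ /eqmxP eqE]].
by split=> //; rewrite eqE capmxSl.
Qed.

Lemma solids_off_point_traces_meet P : is_point P ->
  {in solids_off_point P &,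
    forall S T, ~~ disjoint_sub (P^C :&: S)%MS (P^C :&: T)%MS}.
Proof.
case/andP => _ /eqP rP S T; rewrite !inE.
move=> /existsP[E /and3P[CES sPS nPE]] /existsP[E' /and3P[CET sPT nPE']].
have /and3P[_ /andP[_ /eqP rS] sES] := indepC.1 _ CES.
have /and3P[_ _ sE'T] := indepC.1 _ CET.
apply/negP => dST.
have rST : (\rank (S :&: T) <= 1)%N.
  have := mxrank_leq_capmx (P^C)%MS (S :&: T)%MS; rewrite mxrank_compl rP.
  suff -> : \rank (P^C :&: (S :&: T)) = 0%N by [].
  apply/eqP; rewrite mxrank_eq0 -submx0 -(eqP dST).
  by rewrite sub_capmx !capmxS ?capmxSl ?capmxSr.
have sPST : (P <= S :&: T)%MS by rewrite sub_capmx sPS sPT.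
have dET : disjoint_sub E T := disjoint_sub_point rP sPST rST nPE sES.
have dE'S : disjoint_sub E' S.
  by apply: disjoint_sub_point rP _ _ nPE' sE'T; rewrite capmxC.
have [_ eqST] := flag_indep_eq CES CET dET dE'S.
by move: dST; rewrite -eqST disjoint_subxx -mxrank_eq0 mxrank_compl_capmx // rS rP.
Qed.

Lemma card_solids_off_point P : is_point P ->
  (#|solids_off_point P| <= gauss52 #|F|)%N.
Proof.
move=> pointP; have /andP[_ /eqP rP] := pointP.
have solid_off S : S \in solids_off_point P ->
    [/\ (P <= S)%MS, <<S>>%MS = S & \rank S = 4%N].
  rewrite inE => /existsP[E /and3P[CES sPS _]].
  by have /and3P[_ /andP[/eqP gS /eqP rS] _] := indepC.1 _ CES.
pose trace (S : 'M[F]_7) := <<P^C :&: S>>%MS.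
have trace_inj : {in solids_off_point P &, injective trace}.
  move=> S T /solid_off[sPS gS _] /solid_off[sPT gT _] /genmxP/eqmxP eqST.
  by rewrite -gS -gT; apply/eq_genmx/(compl_capmx_inj sPS sPT).
rewrite -(card_in_imset trace_inj).
apply: (@intersecting_le_gauss52 _ _ (P^C)%MS); first by rewrite mxrank_compl rP.
  move=> _ /imsetP[S /solid_off[sPS _ rS] ->].
  by rewrite /trace genmx_id !genmxE capmxSl mxrank_compl_capmx // rS rP.
move=> _ _ /imsetP[S offS ->] /imsetP[T offT ->].
rewrite -mxrank_eq0 (cap_eqmx (genmxE _) (genmxE _)) mxrank_eq0.
exact: solids_off_point_traces_meet.
Qed.

End IndependentFlags.

Theorem lemma3p1 (F : finFieldType) (C : {set 'M[F]_7 * 'M[F]_7})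
    (H P : 'M[F]_7) :
  flag_indep C -> is_hyperplane H -> is_point P ->
  let calE := [set E : 'M[F]_7 | is_plane E &&
                 [exists S : 'M[F]_7, ((E, S) \in C) && (E == H :&: S)%MS]] in
  let calS := [set S : 'M[F]_7 | [exists E : 'M[F]_7,
                 [&& (E, S) \in C, (P <= S)%MS & ~~ (P <= E)%MS]]] in
  ((forall E E', E \in calE -> E' \in calE -> ~~ disjoint_sub E E') /\
   (#|calE| <= gauss52 #|F|)%N) /\
  (#|calS| <= gauss52 #|F|)%N.
Proof.
move=> indepC hypH pointP calE calS.
split; first split.
- exact: hyperplane_traces_meet.
- exact: card_hyperplane_traces.
- exact: card_solids_off_point.
Qed.
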